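(* Let $q \neq 2$ be a prime power, let $n \geq 1$ be an integer, and let $W$ be the $n$-dimensional affine space over the finite field $\mathbb{F}_q$. Let $A_1,\ldots,A_m$ and $B_1,\ldots,B_m$ be affine subspaces of $W$ such that $A_i \cap B_i = \emptyset$ for each $1 \leq i \leq m$, and $A_i \cap B_j \neq \emptyset$ whenever $1 \leq i < j \leq m$. Then $m \leq q^n + 1$.
   Context: An affine subspace of $W = \mathbb{F}_q^n$ is a translate $v + U$ of a linear subspace $U$ of $\mathbb{F}_q^n$. *)

From mathcomp Require Import all_boot all_order all_algebra.
Set Implicit Arguments. Unset Strict Implicit. Unset Printing Implicit Defensive.
Import GRing.Theory.
Local Open Scope ring_scope.

(* W = F_q^n is modelled as row vectors 'rV[F]_n over a finite field F.
   A linear subspace U of W is the row space of a square matrix U : 'M[F]_n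
   (every subspace arises this way). *)
Definition affine_translate (F : finFieldType) (n : nat)
    (v : 'rV[F]_n) (U : 'M[F]_n) : {set 'rV[F]_n} :=
  [set x | (x - v <= U)%MS].

Definition is_affine_subspace (F : finFieldType) (n : nat)
    (S : {set 'rV[F]_n}) : Prop :=
  exists (v : 'rV[F]_n) (U : 'M[F]_n), S = affine_translate v U.

(** Disjoint affine subspaces A, B are separated by a nonzero linear form r:
    x r takes one value on A and another on B.  If the pairs i < j < k had
    proportional forms, rescaling to a common form r would give
    r(A_j) = r(B_k) = r(A_i) = r(B_j), contradicting the separation of A_j
    and B_j.  So each class of proportional forms carries at most two
    indices; sending the first to a fixed representative r and the second to
    c r, for a scalar c other than 0 and 1 (this is where q <> 2 is used),
    injects the indices into F^n, whence m <= q^n. *)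
From mathcomp Require Import all_boot all_order all_algebra.
Set Implicit Arguments. Unset Strict Implicit. Unset Printing Implicit Defensive.
Import GRing.Theory.
Local Open Scope ring_scope.

Lemma finField_exists_neq01 (F : finFieldType) :
  #|F| != 2 -> exists2 c : F, c != 0 & c != 1.
Proof.
move=> F_neq2; apply/exists_inP; apply: contraR F_neq2 => /exists_inPn F01.
have -> : #|F| = #|[set (0 : F); 1]|.
  apply: eq_card => x; rewrite !inE; case: eqP => //= /eqP x_neq0.
  by apply/esym/negPn/F01.
by rewrite cards2 (eq_sym 0) oner_eq0.
Qed.

Section AffineSeparation.
Variables (F : finFieldType) (n : nat).
Implicit Types (u v w x y : 'rV[F]_n) (U V : 'M[F]_n) (r : 'cV[F]_n).

Lemma affine_translate_level v U r x :
  U *m r = 0 -> x \in affine_translate v U -> x *m r = v *m r.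
Proof.
move=> Ur; rewrite inE => /submxP[D xv].
by apply/eqP; rewrite -subr_eq0 -mulmxBl xv -mulmxA Ur mulmx0.
Qed.

Lemma affine_translate_meet v w U V :
  (w - v <= U + V)%MS -> affine_translate v U :&: affine_translate w V != set0.
Proof.
case/sub_addsmxP=> -[/= u1 u2] wv; apply/set0Pn; exists (v + u1 *m U).
rewrite !inE addrAC subrr add0r submxMl /=.
have -> : v + u1 *m U - w = - (u2 *m V).
  by rewrite addrAC -opprB wv opprD addrAC addNr add0r.
by rewrite -mulNmx submxMl.
Qed.

Lemma notsubmx_annihilator p (W : 'M[F]_(p, n)) w :
  ~~ (w <= W)%MS -> exists2 r : 'cV_n, W *m r = 0 & w *m r != 0.
Proof.
rewrite submxE => /matrix0Pn[i [k wk_neq0]].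
exists (col k (cokermx W)).
  by rewrite colE mulmxA mulmx_coker mul0mx.
apply: contraNneq wk_neq0; rewrite colE mulmxA -colE => /matrixP/(_ i 0).
by rewrite !mxE => ->.
Qed.

Definition separates r (A B : {set 'rV[F]_n}) :=
  [/\ {in A &, forall x y, x *m r = y *m r},
      {in B &, forall x y, x *m r = y *m r} &
      {in A & B, forall x y, x *m r != y *m r}].

Lemma separatesZ r (a : F) A B :
  a != 0 -> separates r A B -> separates (a *: r) A B.
Proof.
move=> a_neq0 [rA rB rAB]; split=> x y xA yB; rewrite -!scalemxAr.
- by rewrite (rA x y).
- by rewrite (rB x y).
- by apply: contra (rAB x y xA yB) => /eqP/(can_inj (scalerK a_neq0))->.
Qed.

Lemma submx_annihilated (X W : 'M[F]_n) r :
  (X <= W)%MS -> W *m r = 0 -> X *m r = 0.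
Proof. by case/submxP=> D -> Wr; rewrite -mulmxA Wr mulmx0. Qed.

Lemma affine_separator A B :
  is_affine_subspace A -> is_affine_subspace B -> A :&: B = set0 ->
  exists2 r : 'cV_n, separates r A B & r != 0.
Proof.
move=> [v [U ->]] [w [V ->]] disjAB.
have /notsubmx_annihilator[r UVr wvr] : ~~ (w - v <= U + V)%MS.
  by apply/negP => /(@affine_translate_meet v w U V); rewrite disjAB eqxx.
have levelA := affine_translate_level (submx_annihilated (addsmxSl U V) UVr).
have levelB := affine_translate_level (submx_annihilated (addsmxSr U V) UVr).
exists r; last by apply: contraNneq wvr => ->; rewrite mulmx0.
split=> x y xA yB.
- by rewrite (levelA _ _ xA) (levelA _ _ yB).
- by rewrite (levelB _ _ xA) (levelB _ _ yB).
- by rewrite (levelA _ _ xA) (levelB _ _ yB) eq_sym -subr_eq0 -mulmxBl.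
Qed.

Lemma separates_chain3 r (A1 B1 A2 B2 A3 B3 : {set 'rV[F]_n}) :
  separates r A1 B1 -> separates r A2 B2 -> separates r A3 B3 ->
  A1 :&: B2 != set0 -> A1 :&: B3 != set0 -> A2 :&: B3 != set0 -> False.
Proof.
move=> [rA1 _ _] [_ _ rA2B2] [_ rB3 _].
case/set0Pn=> x12 /setIP[x12A1 x12B2]; case/set0Pn=> x13 /setIP[x13A1 x13B3].
case/set0Pn=> x23 /setIP[x23A2 x23B3].
move: (rA2B2 x23 x12 x23A2 x12B2).
by rewrite -(rB3 x13 x23) // (rA1 x12 x13) // eqxx.
Qed.

End AffineSeparation.

Section Proportionality.
Variables (F : finFieldType) (n : nat).
Implicit Types u v w : 'cV[F]_n.

Definition proportional u v := [exists a : F, (a != 0) && (v == a *: u)].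

Lemma proportionalP u v :
  reflect (exists2 a : F, a != 0 & v = a *: u) (proportional u v).
Proof.
apply: (iffP existsP) => -[a]; first by case/andP=> a_neq0 /eqP ->; exists a.
by move=> a_neq0 ->; exists a; rewrite a_neq0 eqxx.
Qed.

Lemma proportional_refl u : proportional u u.
Proof. by apply/proportionalP; exists 1; rewrite ?oner_eq0 ?scale1r. Qed.

Lemma proportional_sym u v : proportional u v -> proportional v u.
Proof.
case/proportionalP=> a a_neq0 ->; apply/proportionalP; exists a^-1.
  by rewrite invr_eq0.
by rewrite scalerA mulVf ?scale1r.
Qed.

Lemma proportional_trans u v w :
  proportional u v -> proportional v w -> proportional u w.
Proof.
case/proportionalP=> a a_neq0 ->; case/proportionalP=> b b_neq0 ->.
by apply/proportionalP; exists (b * a); rewrite ?mulf_neq0 ?scalerA.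
Qed.

Lemma proportional_neq0 u v : u != 0 -> proportional u v -> v != 0.
Proof.
by move=> u_neq0 /proportionalP[a a_neq0 ->]; rewrite scalemx_eq0 negb_or a_neq0.
Qed.

Definition proportional_rep u := odflt u [pick v | proportional u v].

Lemma proportional_rep_spec u : proportional u (proportional_rep u).
Proof.
by rewrite /proportional_rep; case: pickP => [v //|_]; apply: proportional_refl.
Qed.

Lemma proportional_rep_eq u v :
  proportional u v -> proportional_rep u = proportional_rep v.
Proof.
move=> uv; rewrite /proportional_rep.
have -> : [pick w | proportional u w] = [pick w | proportional v w].
  apply: eq_pick => w /=; apply/idP/idP; last exact: proportional_trans.
  exact/proportional_trans/proportional_sym.
by case: pickP => // /(_ v); rewrite proportional_refl.
Qed.

End Proportionality.

Section CrossingFamily.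
Variables (F : finFieldType) (n m : nat).
Variables (A B : 'I_m -> {set 'rV[F]_n}) (l : 'I_m -> 'cV[F]_n).
Hypothesis l_sep : forall i, separates (l i) (A i) (B i).
Hypothesis l_neq0 : forall i, l i != 0.
Hypothesis crossing : forall i j : 'I_m, (i < j)%N -> A i :&: B j != set0.

Let r i := proportional_rep (l i).

Lemma separates_rep i : separates (r i) (A i) (B i).
Proof.
rewrite /r; have /proportionalP[a a_neq0 ->] := proportional_rep_spec (l i).
exact: separatesZ.
Qed.

Let r_neq0 i : r i != 0.
Proof. exact: proportional_neq0 (l_neq0 i) (proportional_rep_spec _). Qed.

Lemma no_proportional_chain3 (i j k : 'I_m) :
  (i < j < k)%N -> proportional (l i) (l j) -> proportional (l j) (l k) -> False.
Proof.
case/andP=> lt_ij lt_jk /proportional_rep_eq ri_rj /proportional_rep_eq rj_rk.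
have := separates_rep i; have := separates_rep j; have := separates_rep k.
rewrite -/(r i) -/(r j) -/(r k) in ri_rj rj_rk.
rewrite -rj_rk -ri_rj => sep_k sep_j sep_i.
apply: (separates_chain3 sep_i sep_j sep_k); apply: crossing => //.
exact: ltn_trans lt_jk.
Qed.

Definition has_earlier_proportional (i : 'I_m) :=
  [exists j : 'I_m, (j < i)%N && proportional (l j) (l i)].

Variable c : F.
Hypotheses (c_neq0 : c != 0) (c_neq1 : c != 1).

Definition crossing_code i := (if has_earlier_proportional i then c else 1) *: r i.

Let code_scale_neq0 i : (if has_earlier_proportional i then c else 1) != 0.
Proof. by case: ifP; rewrite ?oner_eq0. Qed.

Lemma crossing_code_proportional i j :
  crossing_code i = crossing_code j -> proportional (l i) (l j).
Proof.
move=> code_ij; apply: proportional_trans (proportional_rep_spec _) _.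
apply: proportional_trans (proportional_sym (proportional_rep_spec (l j))).
move: code_ij (code_scale_neq0 i) (code_scale_neq0 j).
rewrite /crossing_code -/(r i) -/(r j).
set a := (if _ then _ else _); set b := (if _ then _ else _).
move=> code_ij a_neq0 b_neq0; apply/proportionalP; exists (b^-1 * a).
  by rewrite mulf_neq0 ?invr_eq0.
by rewrite -scalerA code_ij scalerA mulVf ?scale1r.
Qed.

Lemma crossing_code_inj : injective crossing_code.
Proof.
move=> i j code_ij; have prop_ij := crossing_code_proportional code_ij.
wlog lt_ij : i j code_ij prop_ij / (i < j)%N.
  move=> wlog_lt; case: (ltngtP i j) => [lt_ij|lt_ji|/val_inj //].
    exact: wlog_lt.
  by apply/esym/wlog_lt => //; apply: proportional_sym.
have earlier_j : has_earlier_proportional j by apply/existsP; exists i; rewrite lt_ij.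
have no_earlier_i : ~~ has_earlier_proportional i.
  apply/existsP => -[k /andP[lt_ki prop_ki]].
  by apply: (@no_proportional_chain3 k i j); rewrite ?lt_ki.
move: code_ij; rewrite /crossing_code (negbTE no_earlier_i) earlier_j scale1r.
rewrite {1}/r (proportional_rep_eq prop_ij) -/(r j) => /eqP.
rewrite -subr_eq0 -{1}(scale1r (r j)) -scalerBl scalemx_eq0 subr_eq0 eq_sym.
by rewrite (negbTE c_neq1) (negbTE (r_neq0 j)).
Qed.

Lemma card_crossing_family : (m <= #|F| ^ n)%N.
Proof.
by have := leq_card _ crossing_code_inj; rewrite card_ord card_mx muln1.
Qed.

End CrossingFamily.

Theorem theorem1p4 (F : finFieldType) (n m : nat)
    (A B : 'I_m -> {set 'rV[F]_n}) :
  #|F| != 2 -> (1 <= n)%N ->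
  (forall i, is_affine_subspace (A i)) ->
  (forall i, is_affine_subspace (B i)) ->
  (forall i, A i :&: B i = set0) ->
  (forall i j : 'I_m, (i < j)%N -> A i :&: B j != set0) ->
  (m <= #|F| ^ n + 1)%N.
Proof.
move=> F_neq2 _ affA affB disjAB crossAB.
have [c c_neq0 c_neq1] := finField_exists_neq01 F_neq2.
have [l l_sep l_neq0] :=
  fin_all_exists2 (fun i => affine_separator (affA i) (affB i) (disjAB i)).
have := card_crossing_family l_sep l_neq0 crossAB c_neq0 c_neq1.
by move/leq_trans; apply; rewrite leq_addr.
Qed.
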